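(* Let $n \in \mathbb{N}$, let $X=\{x_1,\dots,x_m\}$ and $Y=\{y_1,\dots,y_m\}$ be disjoint vertex sets with $m=|X| = |Y| \geqslant n^2 + n$, and let $I \in \{0,1\}^4$. Then $M^<_I(X,Y)$ and $M^>_I(X,Y)$ each have at least $2^{n-1}$ distinct induced ordered subgraphs of order $n$.
   Context: Ordered graphs are graphs with a linear order on the vertices; induced ordered subgraphs are those induced by vertex subsets with the inherited order, and two are distinct if they are not order-isomorphic. For $I=(I_1,I_2,I_3,I_4)\in\{0,1\}^4$ and $x_1<\dots<x_m<y_1<\dots<y_m$, the ordered graph $M^<_I(X,Y)$ on $X\cup Y$ has edges: $x_ix_j$ ($i\neq j$) is an edge iff $I_1=1$; for $i<j$, $x_iy_j$ is an edge iff $I_2=1$; for $i>j$, $x_iy_j$ is an edge iff $I_3=1$; $y_iy_j$ ($i\neq j$) is an edge iff $I_4=1$; $x_iy_i$ is an edge iff $i$ is odd. The ordered graph $M^>_I(X,Y)$ is defined identically except that the vertices of $Y$ are ordered $x_1<\dots<x_m<y_m<\dots<y_1$ (i.e. $y_1>\dots>y_m$). *)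

From mathcomp Require Import all_boot.
Set Implicit Arguments. Unset Strict Implicit. Unset Printing Implicit Defensive.

(* An ordered graph on N vertices: vertex set 'I_N with the natural order of
   'I_N, edge relation E (a symmetric irreflexive boolean relation on 'I_N). *)

(* Labels of the vertices of M_I(X,Y): (false, a) is x_{a+1}, (true, b) is y_{b+1},
   with 0-based indices a, b < m. *)
Definition M_lab (I : bool * bool * bool * bool) (u v : bool * nat) : bool :=
  let: (I1, I2, I3, I4) := I in
  match u, v with
  | (false, a), (false, b) => (a != b) && I1
  | (true, a), (true, b) => (a != b) && I4
  | (false, a), (true, b) | (true, b), (false, a) =>
      if a < b then I2 else if b < a then I3 else ~~ odd a (* a+1 odd *)
  end.

(* M^<: positions 0..m-1 are x_1<..<x_m, positions m..2m-1 are y_1<..<y_m. *)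
Definition lab_lt (m p : nat) : bool * nat :=
  if p < m then (false, p) else (true, p - m).
(* M^>: positions 0..m-1 are x_1<..<x_m, positions m..2m-1 are y_m<..<y_1. *)
Definition lab_gt (m p : nat) : bool * nat :=
  if p < m then (false, p) else (true, (m + m).-1 - p).

Definition M_lt (I : bool * bool * bool * bool) (m : nat) : rel 'I_(m + m) :=
  fun p q => M_lab I (lab_lt m p) (lab_lt m q).
Definition M_gt (I : bool * bool * bool * bool) (m : nat) : rel 'I_(m + m) :=
  fun p q => M_lab I (lab_gt m p) (lab_gt m q).

Definition ord_iso (N : nat) (E : rel 'I_N) (S T : {set 'I_N}) : Prop :=
  exists f : 'I_N -> 'I_N,
    [/\ f @: S = T,
        {in S &, forall u v : 'I_N, u < v -> f u < f v} &
        {in S &, forall u v : 'I_N, E (f u) (f v) = E u v}].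

Definition many_induced (N : nat) (E : rel 'I_N) (n k : nat) : Prop :=
  exists F : {set {set 'I_N}},
    [/\ k <= #|F|,
        {in F, forall S : {set 'I_N}, #|S| = n} &
        {in F &, forall S T : {set 'I_N}, S != T -> ~ ord_iso E S T}].
Arguments M_lt I m : clear implicits.
Arguments M_gt I m : clear implicits.

From mathcomp Require Import all_boot zify.
Set Implicit Arguments. Unset Strict Implicit. Unset Printing Implicit Defensive.

(* Choose n vertices of M_I(X,Y) along a word w in {x,y}^n: the k-th letter picks an x
   or a y, the indices increase along the word, and an x directly followed by a y is a
   pair x_a y_a.  In the induced ordered subgraph the x's come first, and the adjacency
   of an x and a y records their order in the word: I3 if the y comes first, ~~ I3 if it
   comes right after the x, I2 otherwise.  An order isomorphism between two such
   subgraphs preserves ranks, so it suffices to find two ranks whose adjacency differs.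
   Words with the same number of x's are separated at their first discrepancy; words
   with different numbers of x's are separated once one letter (the first or the last,
   depending on I) is fixed, which leaves 2^(n-1) words. *)

Section OrderedEnumeration.
Variable N : nat.

Lemma sorted_val_enum (A : {set 'I_N}) : sorted ltn (map val (enum A)).
Proof.
rewrite -[enum _](eq_filter (mem_enum _)) -(eq_filter (mem_map val_inj _)) -filter_map.
by rewrite (sorted_filter ltn_trans) // unlock val_ord_enum iota_ltn_sorted.
Qed.

Lemma val_enum_sorted_set (s : seq nat) : sorted ltn s -> all (gtn N) s ->
  map val (enum [set p : 'I_N | val p \in s]) = s.
Proof.
move=> s_sorted s_lt; apply: (irr_sorted_eq ltn_trans ltnn) => // [|x].
  exact: sorted_val_enum.
apply/mapP/idP => [[p] | xs]; first by rewrite mem_enum inE => + ->.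
have xN : x < N by move/allP: s_lt => /(_ x xs).
by exists (Ordinal xN); rewrite // mem_enum inE.
Qed.

Lemma ord_iso_enum (E : rel 'I_N) (S T : {set 'I_N}) : ord_iso E S T ->
  exists2 f : 'I_N -> 'I_N,
    map f (enum S) = enum T & {in S &, forall u v, E (f u) (f v) = E u v}.
Proof.
case=> f [fS f_mono fE]; exists f => //.
have lt_trans : transitive (fun u v : 'I_N => u < v) by move=> ? ? ?; apply: ltn_trans.
have enum_sorted (A : {set 'I_N}) : sorted (fun u v : 'I_N => u < v) (enum A).
  by have := sorted_val_enum A; rewrite sorted_map.
apply: (irr_sorted_eq lt_trans).
- by move=> u; apply: ltnn.
- apply: (homo_sorted_in (P := mem S)) (enum_sorted S) => //.
  by apply/allP => u; rewrite mem_enum.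
- exact: enum_sorted.
move=> v; rewrite mem_enum -fS.
apply/mapP/imsetP => -[u]; rewrite ?mem_enum => uS ->; by exists u; rewrite ?mem_enum.
Qed.

Lemma ord_iso_nth (e : rel nat) (S T : {set 'I_N}) :
  ord_iso (fun u v : 'I_N => e u v) S T -> forall i j, i < #|S| -> j < #|S| ->
  e (nth 0 (map val (enum S)) i) (nth 0 (map val (enum S)) j) =
  e (nth 0 (map val (enum T)) i) (nth 0 (map val (enum T)) j).
Proof.
case/ord_iso_enum => f <- fE i j; rewrite cardE.
case Es: (enum S) => [//|x0 s] ilt jlt; rewrite -Es in ilt jlt *.
rewrite -map_comp !(nth_map x0) // fE // -mem_enum mem_nth //.
Qed.

Lemma many_induced_sorted_family (e : rel nat) (n : nat) (B : finType)
    (s : B -> seq nat) :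
  (forall b, sorted ltn (s b)) -> (forall b, all (gtn N) (s b)) ->
  (forall b, size (s b) = n) ->
  (forall b b', b != b' -> exists i j,
     [/\ i < n, j < n &
         e (nth 0 (s b) i) (nth 0 (s b) j) != e (nth 0 (s b') i) (nth 0 (s b') j)]) ->
  many_induced (fun u v : 'I_N => e u v) n #|B|.
Proof.
move=> s_sorted s_lt s_size s_dist.
pose S b := [set p : 'I_N | val p \in s b].
have enumS b : map val (enum (S b)) = s b by apply: val_enum_sorted_set.
have cardS b : #|S b| = n by rewrite cardE -(size_map val) enumS.
have S_noniso b b' : b != b' -> ~ ord_iso (fun u v : 'I_N => e u v) (S b) (S b').
  move=> /s_dist [i [j [ilt jlt]]] /negP + /ord_iso_nth iso; apply.
  by rewrite -!enumS iso ?cardS.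
have S_inj : injective S.
  move=> b b' Sbb'; apply/eqP/negPn/negP => /S_noniso; apply.
  by rewrite Sbb'; exists id; split=> //; apply: imset_id.
exists [set S b | b in B]; split; first by rewrite card_imset.
  by move=> _ /imsetP[b _ ->].
move=> _ _ /imsetP[b _ ->] /imsetP[b' _ ->] neq; apply: S_noniso.
by apply: contraNneq neq => ->.
Qed.

End OrderedEnumeration.

Section PrefixCounts.
Variable p : pred nat.

Lemma count_iotaS k : count p (iota 0 k.+1) = count p (iota 0 k) + p k.
Proof. by rewrite -addn1 iotaD count_cat /= addn0. Qed.

Lemma leq_count_iota : {homo (fun k => count p (iota 0 k)) : a b / a <= b}.
Proof. by move=> a b ab; rewrite /= -(subnKC ab) iotaD count_cat leq_addr. Qed.

Lemma nth_filter_iota n k : k < n -> p k ->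
  nth 0 [seq j <- iota 0 n | p j] (count p (iota 0 k)) = k.
Proof.
move=> kn pk; have -> : n = k + (n - k).-1.+1 by lia.
by rewrite iotaD filter_cat nth_cat size_filter ltnn subnn /= pk.
Qed.

End PrefixCounts.

(* A word [w] is read on [0, n): [w k] says that the k-th vertex lies in Y. *)
Section Words.
Variables (n : nat) (o : bool).
Implicit Types (w : pred nat) (k r : nat).

Definition cx w k := count (fun j => ~~ w j) (iota 0 k).
Definition cy w k := count w (iota 0 k).
Definition nx w := cx w n.

Definition rank w k :=
  if w k then nx w + (if o then cy w n - (cy w k).+1 else cy w k) else cx w k.

(* [o] selects M^>, where the y-vertices come in reverse order. *)
Definition rank_order w :=
  [seq k <- iota 0 n | ~~ w k] ++ (if o then rev else id) [seq k <- iota 0 n | w k].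

Definition vert w r := nth 0 (rank_order w) r.

Lemma cxS w k : cx w k.+1 = cx w k + ~~ w k.
Proof. exact: count_iotaS. Qed.

Lemma cyS w k : cy w k.+1 = cy w k + w k.
Proof. exact: count_iotaS. Qed.

Lemma cx_cy w k : cx w k + cy w k = k.
Proof. by rewrite addnC -[RHS](size_iota 0) -(count_predC w). Qed.

Lemma leq_cx w : {homo cx w : a b / a <= b}.
Proof. exact: leq_count_iota. Qed.

Lemma leq_cy w : {homo cy w : a b / a <= b}.
Proof. exact: leq_count_iota. Qed.

Lemma nx_le w : nx w <= n.
Proof. by have := cx_cy w n; rewrite /nx; lia. Qed.

Lemma perm_rank_order w : perm_eq (rank_order w) (iota 0 n).
Proof.
have split : perm_eq ([seq k <- iota 0 n | w k] ++ [seq k <- iota 0 n | ~~ w k]) (iota 0 n).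
  by rewrite perm_filterC.
rewrite /rank_order perm_catC; apply: perm_trans split.
by case: o; rewrite /= perm_cat2r ?perm_rev.
Qed.

Lemma size_rank_order w : size (rank_order w) = n.
Proof. by rewrite (perm_size (perm_rank_order w)) size_iota. Qed.

Lemma vert_ltn w r : r < n -> vert w r < n.
Proof.
move=> rn; have : vert w r \in rank_order w by rewrite mem_nth ?size_rank_order.
by rewrite (perm_mem (perm_rank_order w)) mem_iota.
Qed.

Lemma rank_lt_nx w k : k < n -> (rank w k < nx w) = ~~ w k.
Proof.
move=> kn; have := leq_cx w kn; rewrite /rank cxS /nx.
by case: (w k) => /= ?; lia.
Qed.

Lemma rank_ltn w k : k < n -> rank w k < n.
Proof.
move=> kn; have := leq_cy w kn; have := cx_cy w n; have := rank_lt_nx w kn.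
by rewrite /rank cyS /nx; case: (w k) o => -[] /=; lia.
Qed.

Lemma vertK w k : k < n -> vert w (rank w k) = k.
Proof.
move=> kn; have := rank_lt_nx w kn; rewrite /vert /rank_order nth_cat size_filter.
rewrite -/(cx w n) -/(nx w); case wk: (w k) => -> /=; last first.
  by rewrite /rank wk nth_filter_iota ?wk.
rewrite /rank wk addKn.
have cy_lt : cy w k < cy w n by have := leq_cy w kn; rewrite cyS wk; lia.
case: o => /=; last exact: nth_filter_iota.
rewrite nth_rev size_filter -/(cy w n); last by lia.
by rewrite subnSK // subKn 1?ltnW // nth_filter_iota.
Qed.

Lemma rankK w r : r < n -> rank w (vert w r) = r.
Proof.
move=> rn; have kn := vert_ltn w rn.
have uniq_order : uniq (rank_order w) by rewrite (perm_uniq (perm_rank_order w)) iota_uniq.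
apply/eqP; rewrite -(nth_uniq 0 _ _ uniq_order) ?size_rank_order ?rank_ltn //.
by rewrite -/(vert w _) vertK.
Qed.

Lemma vert_inj w i j : i < n -> j < n -> vert w i = vert w j -> i = j.
Proof. by move=> ilt jlt eq_ij; rewrite -(rankK w ilt) eq_ij rankK. Qed.

Lemma vert_lt_nx w r : r < n -> (r < nx w) = ~~ w (vert w r).
Proof. by move=> rn; rewrite -rank_lt_nx ?vert_ltn ?rankK. Qed.

Lemma vert_x w r : r < nx w -> w (vert w r) = false.
Proof. by move=> rlt; apply/negbTE; rewrite -vert_lt_nx // (leq_trans rlt (nx_le w)). Qed.

Lemma vert_y w r : nx w <= r -> r < n -> w (vert w r).
Proof. by move=> rge rlt; apply/negPn; rewrite -vert_lt_nx // ltnNge rge. Qed.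

Lemma cx_vert w r : r < nx w -> cx w (vert w r) = r.
Proof.
move=> rlt; have rn := leq_trans rlt (nx_le w).
by have := rankK w rn; rewrite /rank vert_x.
Qed.

Variables (I1 I2 I3 I4 : bool).

Definition xy_adj k k' := if k' == k.+1 then ~~ I3 else if k < k' then I2 else I3.

Definition adj w k k' :=
  match w k, w k' with
  | false, false => (k != k') && I1
  | true, true => (k != k') && I4
  | false, true => xy_adj k k'
  | true, false => xy_adj k' k
  end.

Definition distinguishable w w' := exists i j,
  [/\ i < n, j < n & adj w (vert w i) (vert w j) != adj w' (vert w' i) (vert w' j)].

Lemma distinguishable_sym w w' : distinguishable w w' -> distinguishable w' w.
Proof. by case=> i [j [ilt jlt neq]]; exists i, j; rewrite eq_sym. Qed.

Lemma adj_vert_xx w i j : i < nx w -> j < nx w -> i != j -> adj w (vert w i) (vert w j) = I1.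
Proof.
move=> ilt jlt neq; have nxn := nx_le w.
by rewrite /adj !vert_x // (contra_neq (vert_inj _ _)) //; lia.
Qed.

Lemma adj_vert_yy w i j : nx w <= i < n -> nx w <= j < n -> i != j ->
  adj w (vert w i) (vert w j) = I4.
Proof.
move=> /andP[ige ilt] /andP[jge jlt] neq.
by rewrite /adj !vert_y // (contra_neq (vert_inj _ _)).
Qed.

Lemma distinguishable_first_diff w w' k : k < n -> (forall j, j < k -> w j = w' j) ->
  w k = false -> w' k -> nx w = nx w' -> distinguishable w w'.
Proof.
move=> kn pre wk w'k nx_eq.
(* The y of w with the rank of the y at k in w' ends a run of x's starting at k; the last
   x of the run is tied to it in w, while in w' the x of that rank comes after k. *)
have cx_k : cx w k = cx w' k.
  by apply: eq_in_count => j; rewrite mem_iota => /pre ->.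
have cy_k : cy w k = cy w' k.
  by apply: eq_in_count => j; rewrite mem_iota => /pre ->.
have cy_n : cy w n = cy w' n.
  by have := cx_cy w n; have := cx_cy w' n; rewrite /nx in nx_eq; lia.
pose j := rank w' k; have jn : j < n by apply: rank_ltn.
have j_ge : nx w <= j by rewrite nx_eq leqNgt rank_lt_nx // w'k.
pose k2 := vert w j; have k2n : k2 < n by apply: vert_ltn.
have wk2 : w k2 by apply: vert_y.
have cy_k2 : cy w k2 = cy w k.
  have := rankK w jn; rewrite -/k2 /j /rank wk2 w'k nx_eq.
  have := leq_cy w k2n; have := leq_cy w' kn; rewrite !cyS wk2 w'k.
  by case: o => /=; lia.
have k_lt_k2 : k < k2.
  rewrite ltn_neqAle; apply/andP; split; first by apply: contraTneq wk2 => <-; rewrite wk.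
  by rewrite leqNgt; apply/negP => /(leq_cy w); rewrite cyS wk2 cy_k2; lia.
pose k1 := k2.-1; have k2E : k2 = k1.+1 by rewrite /k1; lia.
have k_le_k1 : k <= k1 by lia.
have k1n : k1 < n by lia.
have wk1 : w k1 = false.
  have := leq_cy w k_le_k1; have := cyS w k1; rewrite -k2E cy_k2.
  by case: (w k1) => //=; lia.
pose i := cx w k1.
have i_lt : i < nx w by have := rank_lt_nx w k1n; rewrite /rank wk1.
pose l := vert w' i.
have w'l : w' l = false by apply: vert_x; rewrite -nx_eq.
have k_lt_l : k < l.
  have cx_l : cx w' l = i by apply: cx_vert; rewrite -nx_eq.
  rewrite ltn_neqAle; apply/andP; split; first by apply: contraTneq w'k => ->; rewrite w'l.
  rewrite leqNgt; apply/negP => /(leq_cx w'); rewrite cxS w'l -cx_k.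
  by have := leq_cx w k_le_k1; lia.
exists i, j; split => //; first by lia.
have -> : vert w i = k1 by have := vertK w k1n; rewrite /rank wk1.
rewrite -/k2 vertK // /adj wk1 wk2 w'l w'k /xy_adj k2E eqxx.
by rewrite ifF ?ltnNge ?(ltnW k_lt_l); [case: I3 | lia].
Qed.

Lemma distinguishable_same_nx w w' k : k < n -> w k != w' k -> nx w = nx w' ->
  distinguishable w w'.
Proof.
move=> kn neq nx_eq; have exQ : exists k, (k < n) && (w k != w' k) by exists k; rewrite kn.
case: (ex_minnP exQ) => {}k /andP[{}kn {}neq] kmin.
have pre j : j < k -> w j = w' j.
  move=> jk; apply/eqP/negPn/negP => neq_j.
  by have := kmin j; rewrite neq_j (ltn_trans jk kn) => /(_ isT); lia.
move: neq; case wk: (w k); case w'k: (w' k) => // _.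
  by apply/distinguishable_sym/(distinguishable_first_diff kn) => // j /pre.
exact: distinguishable_first_diff kn pre wk w'k nx_eq.
Qed.

Lemma distinguishable_last_x w w' : I1 != I3 -> w n.-1 = false -> w' n.-1 = false ->
  nx w < nx w' -> distinguishable w w'.
Proof.
move=> I13 wn w'n lt_nx; have nx'n := nx_le w'.
have n0 : 0 < n by lia.
have n1n : n.-1 < n by lia.
have nxE : nx w = (cx w n.-1).+1 by rewrite /nx -{1}(prednK n0) cxS wn addn1.
pose k2 := vert w (nx w); have k2n : k2 < n by apply: vert_ltn; lia.
have wk2 : w k2 by apply: vert_y => //; lia.
have k2_ne : k2 != n.-1 by apply: contraTneq wk2 => ->; rewrite wn.
have k2_lt : k2 < n.-1 by lia.
exists (nx w).-1, (nx w); split; try lia.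
rewrite (adj_vert_xx (w := w')); try lia.
have -> : vert w (nx w).-1 = n.-1 by rewrite nxE; have := vertK w n1n; rewrite /rank wn.
rewrite -/k2 /adj wn wk2 /xy_adj ifF; last by apply/negbTE; rewrite neq_ltn ltnS ltnW.
by rewrite ltnNge (ltnW k2_lt) eq_sym.
Qed.

Lemma distinguishable_last_y w w' : I4 = I3 -> w n.-1 -> w' n.-1 ->
  nx w < nx w' -> distinguishable w w'.
Proof.
move=> I43 wn w'n lt_nx; have nx'n := nx_le w'.
pose l := vert w' (nx w').-1.
have w'l : w' l = false by apply: vert_x; lia.
have cx_l : cx w' l = (nx w').-1 by apply: cx_vert; lia.
have ln : l < n by apply: vert_ltn; lia.
have l_ne : l != n.-1 by apply: contraTneq w'n => <-; rewrite w'l.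
have l1n : l.+1 < n by lia.
have w'l1 : w' l.+1.
  apply/negPn/negP => w'l1; have := leq_cx w' l1n.
  by rewrite !cxS w'l1 w'l cx_l -/(nx w') /=; lia.
pose j := rank w' l.+1.
have j_ge : nx w' <= j by rewrite leqNgt rank_lt_nx // w'l1.
have jn : j < n by apply: rank_ltn.
exists (nx w').-1, j; split; try lia.
rewrite adj_vert_yy; try lia.
by rewrite vertK // /adj w'l w'l1 /xy_adj eqxx I43; case: I3.
Qed.

Lemma distinguishable_first_y w w' : o -> I4 != I3 -> w 0 -> w' 0 ->
  nx w < nx w' -> distinguishable w w'.
Proof.
move=> ho I43 w0 w'0 lt_nx; have nx'n := nx_le w'.
have n0 : 0 < n by lia.
have rank0 (u : pred nat) : u 0 -> rank u 0 = n.-1.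
  move=> u0; have := leq_cy u n0; have := cx_cy u n.
  by rewrite /rank u0 ho /nx /cy /= u0 /=; lia.
have nx'_le : nx w' <= n.-1 by rewrite -(rank0 w' w'0) leqNgt rank_lt_nx ?w'0 //; lia.
pose l := vert w' (nx w).
have w'l : w' l = false by apply: vert_x.
exists (nx w), n.-1; split; try lia.
rewrite adj_vert_yy; try lia.
have -> : vert w' n.-1 = 0 by rewrite -(rank0 w' w'0) vertK //; lia.
by rewrite -/l /adj w'l w'0 /xy_adj /= ?ltn0.
Qed.

Lemma distinguishable_first_x w w' : o = false -> I1 = I3 -> w 0 = false -> w' 0 = false ->
  nx w < nx w' -> distinguishable w w'.
Proof.
move=> ho I13 w0 w'0 lt_nx; have nx'n := nx_le w'.
have nxn : nx w < n by lia.
pose k2 := vert w (nx w); have k2n : k2 < n by apply: vert_ltn.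
have wk2 : w k2 by apply: vert_y.
have cy_k2 : cy w k2 = 0 by have := rankK w nxn; rewrite -/k2 /rank wk2 ho; lia.
have k2_gt0 : 0 < k2 by rewrite lt0n; apply: contraTneq wk2 => ->; rewrite w0.
pose k1 := k2.-1; have k2E : k2 = k1.+1 by rewrite prednK.
have wk1 : w k1 = false by move: cy_k2; rewrite k2E cyS; case: (w k1) => //=; lia.
have cx_k1 : cx w k1 = k1 by have := cx_cy w k1; move: cy_k2; rewrite k2E cyS wk1; lia.
have k1_lt : k1 < nx w by have := leq_cx w (ltnW k2n); have := cx_cy w k2; rewrite /nx; lia.
exists k1, (nx w); split; try lia.
rewrite (adj_vert_xx (w := w')); try lia.
have k1n : k1 < n by lia.
have -> : vert w k1 = k1 by have := vertK w k1n; rewrite /rank wk1 cx_k1.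
by rewrite -/k2 /adj wk1 wk2 /xy_adj k2E eqxx I13; case: I3.
Qed.

Definition fix_last := (I1 != I3) || (I4 == I3).
Definition fixed_letter := if I1 != I3 then false else if I4 == I3 then true else o.
Definition fixed_pos := if fix_last then n.-1 else 0.

Lemma distinguishable_lt_nx w w' :
  w fixed_pos = fixed_letter -> w' fixed_pos = fixed_letter -> nx w < nx w' ->
  distinguishable w w'.
Proof.
rewrite /fixed_pos /fix_last /fixed_letter.
case: (boolP (I1 != I3)) => [I13 /= | /negPn/eqP I13].
  exact: distinguishable_last_x.
case: (boolP (I4 == I3)) => [/eqP I43 /= | I43 /=]; first exact: distinguishable_last_y.
by case ho: o; [apply: distinguishable_first_y | apply: distinguishable_first_x].
Qed.

Lemma distinguishable_fixed w w' :
  w fixed_pos = fixed_letter -> w' fixed_pos = fixed_letter ->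
  (exists2 k, k < n & w k != w' k) -> distinguishable w w'.
Proof.
move=> fw fw' [k kn neq]; case: (ltngtP (nx w) (nx w')) => [lt|gt|eq].
- exact: distinguishable_lt_nx.
- exact/distinguishable_sym/distinguishable_lt_nx.
- exact: distinguishable_same_nx kn neq eq.
Qed.

Definition word (b : seq bool) : pred nat :=
  nth false (if fix_last then rcons b fixed_letter else fixed_letter :: b).

Lemma word_fixed (b : (n.-1).-tuple bool) : word b fixed_pos = fixed_letter.
Proof.
by rewrite /word /fixed_pos; case: fix_last; rewrite // nth_rcons size_tuple ltnn eqxx.
Qed.

Lemma word_diff (b b' : (n.-1).-tuple bool) :
  b != b' -> exists2 k, k < n & word b k != word b' k.
Proof.
case: (boolP [exists i, tnth b i != tnth b' i]) => [/existsP[i neq_i] _ | /existsPn same].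
  have i_lt := ltn_ord i; rewrite !(tnth_nth false) in neq_i.
  exists (if fix_last then val i else i.+1); first by case: fix_last => /=; lia.
  by rewrite /word; case: fix_last; rewrite //= !nth_rcons !size_tuple i_lt.
case/eqP; apply: eq_from_tnth => i.
by apply/eqP; have := same i; rewrite negbK.
Qed.

End Words.

Section Embedding.
Variables (o I1 I2 I3 I4 : bool).
Implicit Types (w : pred nat) (k : nat).

(* Indices increase along the word, and a y directly after an x gets the index a of that
   x, so that the edge x_a y_a is present iff a is even, i.e. iff ~~ I3. *)
Definition xv k := k.*2 + I3.
Definition yv w k := if (0 < k) && ~~ w k.-1 then xv k.-1 else k.*2 + ~~ I3.

Definition lab w k := if w k then (true, yv w k) else (false, xv k).

Lemma yv_bounds w k : k.-1.*2 <= yv w k <= k.*2.+1.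
Proof. by rewrite /yv /xv; case: ifP => _; case: I3 => /=; lia. Qed.

Lemma yv_mono w k k' : k < k' -> w k -> yv w k < yv w k'.
Proof.
move=> lt wk; have := yv_bounds w k; case: (boolP (k' == k.+1)) => [/eqP -> | ne].
  by rewrite [yv w k.+1]/yv /= wk /=; case: I3 => /=; lia.
by have := yv_bounds w k'; lia.
Qed.

Lemma yv_inj w k k' : w k -> w k' -> yv w k = yv w k' -> k = k'.
Proof.
move=> wk wk' eq_y; case: (ltngtP k k') => // lt.
- by have := yv_mono lt wk; rewrite eq_y ltnn.
- by have := yv_mono lt wk'; rewrite eq_y ltnn.
Qed.

Lemma xv_yv_adj w k k' : w k = false -> w k' ->
  (if xv k < yv w k' then I2 else if yv w k' < xv k then I3 else ~~ odd (xv k)) =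
  xy_adj I2 I3 k k'.
Proof.
move=> wk wk'; have bnd := yv_bounds w k'; rewrite /xy_adj.
case: (boolP (k' == k.+1)) => [/eqP -> | ne].
  by rewrite /yv /= wk ltnn /xv oddD odd_double; case: I3.
rewrite /xv; case: (ltngtP k k') => [lt | gt | eq]; last by move: wk; rewrite eq wk'.
- by rewrite ifT //; case: I3 => /=; lia.
- by rewrite ifF ?ifT //; case: I3 => /=; lia.
Qed.

Lemma M_lab_lab w k k' :
  M_lab (I1, I2, I3, I4) (lab w k) (lab w k') = adj I1 I2 I3 I4 w k k'.
Proof.
have xv_eq : (xv k == xv k') = (k == k') by rewrite /xv eqn_add2r (inj_eq (can_inj doubleK)).
rewrite /lab /adj; case wk: (w k); case wk': (w k') => /=.
- by congr (~~ _ && _); apply/eqP/eqP => [/(yv_inj wk wk') | ->].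
- exact: xv_yv_adj.
- exact: xv_yv_adj.
- by rewrite xv_eq.
Qed.

Variables (m n : nat).
Hypothesis n2_le_m : n + n <= m.

Definition pos w k := if w k then (if o then (m + m).-1 - yv w k else m + yv w k) else xv k.
Definition lab_o p := if o then lab_gt m p else lab_lt m p.

Lemma lab_pos w k : k < n -> lab_o (pos w k) = lab w k.
Proof.
move=> kn; have := yv_bounds w k; rewrite /lab_o /pos /lab /lab_gt /lab_lt /xv.
case: (w k) => bnd; last by case: o; rewrite ifT //; case: I3 => /=; lia.
by case: o; rewrite ifF; try congr (_, _); lia.
Qed.

Lemma pos_lt w k : k < n -> pos w k < m + m.
Proof.
by move=> kn; have := yv_bounds w k; rewrite /pos /xv; case: (w k) o I3 => -[] [] /=; lia.
Qed.

Lemma sorted_pos w : sorted ltn (map (pos w) (rank_order n o w)).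
Proof.
have below_n (a : pred nat) : all (fun k => (k < n) && a k) [seq k <- iota 0 n | a k].
  by apply/allP => k; rewrite mem_filter mem_iota andbC.
have filter_sorted (a : pred nat) : sorted ltn [seq k <- iota 0 n | a k].
  by apply: (sorted_filter ltn_trans); apply: iota_ltn_sorted.
rewrite map_cat (sorted_pairwise ltn_trans) pairwise_cat -!(sorted_pairwise ltn_trans).
apply/and3P; split.
- have ys_mem (s : seq nat) : (if o then rev else id) s =i s.
    by case: o => // k; rewrite mem_rev.
  apply/allrelP => _ _ /mapP[k + ->] /mapP[k' + ->].
  rewrite ys_mem !mem_filter !mem_iota /= => /andP[wk kn] /andP[wk' k'n].
  have := yv_bounds w k'; rewrite /pos (negbTE wk) wk' /xv.
  by case: o I3 => -[] /=; lia.
- apply: homo_sorted_in (below_n _) (filter_sorted _) => k k'; rewrite !unfold_in.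
  by move=> /andP[_ wk] /andP[_ wk']; rewrite /pos (negbTE wk) (negbTE wk') /xv; lia.
rewrite /pos; case: o => /=; last first.
  apply: homo_sorted_in (below_n _) (filter_sorted _) => k k'; rewrite !unfold_in.
  by move=> /andP[_ wk] /andP[_ wk'] lt; rewrite wk wk' ltn_add2l yv_mono.
rewrite map_rev rev_sorted; apply: homo_sorted_in (below_n _) (filter_sorted _) => k k'.
rewrite !unfold_in => /andP[kn wk] /andP[k'n wk'] lt; rewrite wk wk'.
by have := yv_mono lt wk; have := yv_bounds w k'; lia.
Qed.

Lemma many_induced_M :
  many_induced (fun u v : 'I_(m + m) => M_lab (I1, I2, I3, I4) (lab_o u) (lab_o v))
    n (2 ^ n.-1).
Proof.
have <- : #|{: (n.-1).-tuple bool}| = 2 ^ n.-1 by rewrite card_tuple card_bool.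
pose w (b : (n.-1).-tuple bool) := word o I1 I3 I4 b.
apply: (many_induced_sorted_family (e := fun p q => M_lab (I1, I2, I3, I4) (lab_o p) (lab_o q))
  (s := fun b => map (pos (w b)) (rank_order n o (w b)))).
- by move=> b; apply: sorted_pos.
- move=> b; apply/allP => _ /mapP[k + ->].
  by rewrite (perm_mem (perm_rank_order _ _ _)) mem_iota => kn; apply: pos_lt.
- by move=> b; rewrite size_map size_rank_order.
move=> b b' /(word_diff o I1 I3 I4) diff.
have [i [j [ilt jlt neq]]] :=
  distinguishable_fixed I2 (word_fixed o I1 I3 I4 b) (word_fixed o I1 I3 I4 b') diff.
exists i, j; split => //.
by rewrite !(nth_map 0) ?size_rank_order // !lab_pos ?vert_ltn // !M_lab_lab.
Qed.

End Embedding.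

Theorem lemma4 (n m : nat) (I : bool * bool * bool * bool) :
  n ^ 2 + n <= m ->
  many_induced (M_lt I m) n (2 ^ n.-1) /\ many_induced (M_gt I m) n (2 ^ n.-1).
Proof.
move=> nm; have n2m : n + n <= m by nia.
case: I => [[[I1 I2] I3] I4].
by split; [apply: (many_induced_M false) | apply: (many_induced_M true)].
Qed.
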